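(* Let $R$ be a commutative ring and $(A,d)$ a differential graded $R$-algebra such that every dg-simple left dg-module over $(A,d)$ is acyclic. Then every left dg-module over $(A,d)$ of finite dg-composition length is acyclic. In particular, if $(A,d)$, as a left dg-module over itself, has finite dg-composition length, then $(A,d)$ is acyclic.
   Context: A differential graded (dg) $R$-algebra $(A,d)$ is a $\mathbb{Z}$-graded $R$-algebra $A$ with an $R$-linear degree-$1$ endomorphism $d$, $d^2=0$, $d(ab)=d(a)b+(-1)^{|a|}a\,d(b)$ for homogeneous $a,b$. A left dg-module $(M,\delta)$ is a graded left $A$-module with a degree-$1$ map $\delta$, $\delta^2=0$, $\delta(am)=d(a)m+(-1)^{|a|}a\,\delta(m)$; dg-submodules are graded submodules stable under $\delta$; $(S,\delta)$ is dg-simple if $S\neq0$ and its only dg-submodules are $0,S$. A dg-module has finite dg-composition length $n$ if it has a chain of dg-submodules $0=M_0\subset M_1\subset\dots\subset M_n=M$ with each $M_i/M_{i-1}$ dg-simple. Acyclic means the homology $\ker\delta/\operatorname{im}\delta$ vanishes. *)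

From HB Require Import structures.
From mathcomp Require Import all_boot all_order all_algebra.
Set Implicit Arguments. Unset Strict Implicit. Unset Printing Implicit Defensive.
Import Order.TTheory GRing.Theory Num.Theory.
Local Open Scope ring_scope.

(* An R-algebra (R commutative, possibly the zero ring) is a ring A with a
   ring morphism phi : R -> A whose image is central; r * a := phi r * a.
   A left A-module is an lmodType A (scaling a *: m), with R acting through phi.
   A Z-grading of an additive group V is a family G : int -> pred V of
   subgroups (closed under the R-action) such that V is their internal direct sum. *)

Section DG.
Variables (R : comPzRingType) (A : pzRingType) (phi : {rmorphism R -> A}).

Definition R_algebra : Prop := forall (r : R) (a : A), phi r * a = a * phi r.

Definition direct_sum_decomp (V : zmodType) (G : int -> pred V) : Prop :=
  (forall v : V, exists (s : seq int) (f : int -> V),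
      [/\ uniq s, (forall i, f i \in G i) & v = \sum_(i <- s) f i]) /\
  (forall (s : seq int) (f : int -> V), uniq s -> (forall i, f i \in G i) ->
      \sum_(i <- s) f i = 0 -> forall i, i \in s -> f i = 0).

Definition additive_subgroup (V : zmodType) (P : pred V) : Prop :=
  0 \in P /\ (forall x y, x \in P -> y \in P -> x - y \in P).

Definition dg_algebra (GA : int -> pred A) (d : A -> A) : Prop :=
  R_algebra /\
      (forall n, additive_subgroup (GA n)) /\
      (forall n (r : R) a, a \in GA n -> phi r * a \in GA n) /\
      direct_sum_decomp GA /\
      1 \in GA 0 /\
      (forall m n a b, a \in GA m -> b \in GA n -> a * b \in GA (m + n)) /\
      (forall (r : R) a b, d (phi r * a + b) = phi r * d a + d b) /\
      (forall n a, a \in GA n -> d a \in GA (n + 1)) /\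
      (forall a, d (d a) = 0) /\
      (forall m n a b, a \in GA m -> b \in GA n ->
          d (a * b) = d a * b + (-1) ^+ `|m|%N * a * d b).

Definition dg_module (GA : int -> pred A) (d : A -> A)
    (M : lmodType A) (GM : int -> pred M) (delta : M -> M) : Prop :=
  (forall n, additive_subgroup (GM n)) /\
  (forall n (r : R) x, x \in GM n -> phi r *: x \in GM n) /\
  direct_sum_decomp GM /\
  (forall m n a x, a \in GA m -> x \in GM n -> a *: x \in GM (m + n)) /\
  (forall (r : R) x y, delta (phi r *: x + y) = phi r *: delta x + delta y) /\
  (forall n x, x \in GM n -> delta x \in GM (n + 1)) /\
  (forall x, delta (delta x) = 0) /\
  (forall m n a x, a \in GA n -> x \in GM m ->
      delta (a *: x) = d a *: x + ((-1) ^+ `|n|%N * a) *: delta x).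

Definition dg_submodule (M : lmodType A) (GM : int -> pred M) (delta : M -> M)
    (N : pred M) : Prop :=
  [/\ additive_subgroup N,
      (forall a x, x \in N -> a *: x \in N),
      (forall x, x \in N -> exists (s : seq int) (f : int -> M),
          [/\ (forall i, f i \in GM i), (forall i, f i \in N) & x = \sum_(i <- s) f i]) &
      (forall x, x \in N -> delta x \in N)].

Definition dg_simple (M : lmodType A) (GM : int -> pred M) (delta : M -> M) : Prop :=
  (exists x : M, x != 0) /\
  (forall N : pred M, dg_submodule GM delta N ->
      (forall x, x \in N -> x = 0) \/ (forall x, x \in N)).

Definition acyclic (M : zmodType) (delta : M -> M) : Prop :=
  forall x, delta x = 0 -> exists y, x = delta y.

(* For dg-submodules N ⊆ N' of M, the quotient N'/N is dg-simple.
   By the correspondence theorem (dg-submodules of N'/N = dg-submodules L of M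
   with N ⊆ L ⊆ N') this means: N'/N <> 0 and there is nothing strictly between. *)
Definition dg_simple_subquotient (M : lmodType A) (GM : int -> pred M)
    (delta : M -> M) (N N' : pred M) : Prop :=
  (exists x, x \in N' /\ x \notin N) /\
  (forall L : pred M, dg_submodule GM delta L ->
      (forall x, x \in N -> x \in L) -> (forall x, x \in L -> x \in N') ->
      (forall x, x \in L -> x \in N) \/ (forall x, x \in N' -> x \in L)).

Definition dg_comp_length (M : lmodType A) (GM : int -> pred M) (delta : M -> M)
    (n : nat) : Prop :=
  exists Ms : nat -> pred M,
    [/\ (forall i, (i <= n)%N -> dg_submodule GM delta (Ms i)),
        (forall x, x \in Ms 0%N -> x = 0),
        (forall x, x \in Ms n),
        (forall i, (0 < i <= n)%N -> forall x, x \in Ms i.-1 -> x \in Ms i) &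
        (forall i, (0 < i <= n)%N -> dg_simple_subquotient GM delta (Ms i.-1) (Ms i))].

End DG.

From HB Require Import structures.
From mathcomp Require Import all_boot all_order all_algebra ring_quotient boolp.
Import GRing.Theory.
Local Open Scope ring_scope.
Set Implicit Arguments. Unset Strict Implicit. Unset Printing Implicit Defensive.

(* Induction along the composition series 0 = M_0 < ... < M_n = M: if every
   cycle of M_i is a boundary of an element of M_i, take a cycle x of M_{i+1}.
   Its class in the dg-simple subquotient M_{i+1}/M_i is a cycle, hence a
   boundary, so x - dy lies in M_i for some y in M_{i+1}; being a cycle of M_i,
   x - dy = dz with z in M_i, and x = d(y + z). *)

Definition zmodClosed_of (V : zmodType) (P : pred V) (P_subgroup : additive_subgroup P) :
    zmodClosed V :=
  HB.pack_for (zmodClosed V) P (GRing.isZmodClosed.Build V P P_subgroup).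

Definition graded (V : zmodType) (G : int -> {pred V}) (P : {pred V}) : Prop :=
  forall x, x \in P -> exists (s : seq int) (f : int -> V),
    [/\ forall i, f i \in G i, forall i, f i \in P & x = \sum_(i <- s) f i].

Lemma sumr_undup_count (V : nmodType) (I : eqType) (r : seq I) (P : pred I) (F : I -> V) :
  \sum_(i <- undup r | P i) F i *+ count_mem i r = \sum_(i <- r | P i) F i.
Proof. exact: big_undup_iterop_count. Qed.

Section GradedSubgroups.
Variables (V : zmodType) (G : int -> zmodClosed V).
Local Notation Gp := (fun i => G i : {pred V}).
Hypothesis G_direct : direct_sum_decomp Gp.

Lemma graded_decomp_uniq (P : zmodClosed V) x : graded Gp P -> x \in P ->
  exists (s : seq int) (f : int -> V),
    [/\ uniq s, forall i, f i \in G i, forall i, f i \in P & x = \sum_(i <- s) f i].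
Proof.
move=> P_graded /P_graded[s [f [fG fP ->]]].
exists (undup s), (fun i => f i *+ count_mem i s).
by split; [exact: undup_uniq | move=> i; exact: rpredMn.. | rewrite sumr_undup_count].
Qed.

Lemma direct_sum_coord (s t : seq int) (f h : int -> V) :
  uniq s -> uniq t -> (forall i, f i \in G i) -> (forall i, h i \in G i) ->
  \sum_(i <- s) f i = \sum_(i <- t) h i ->
  {in s, forall i, f i = if i \in t then h i else 0}.
Proof.
move=> s_uniq t_uniq fG hG eq_sum i si.
pose ext (r : seq int) (F : int -> V) j := if j \in r then F j else 0.
have sum_ext r F : uniq r -> {subset r <= undup (s ++ t)} ->
    \sum_(j <- undup (s ++ t)) ext r F j = \sum_(j <- r) F j.
  move=> r_uniq r_sub; rewrite -big_mkcond -big_filter; apply: perm_big.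
  apply: uniq_perm => [||j]; rewrite ?filter_uniq ?undup_uniq //.
  by rewrite mem_filter andb_idr //; apply: r_sub.
have extG r F j : (forall i, F i \in G i) -> ext r F j \in G j.
  by move=> FG; rewrite /ext; case: ifP; rewrite ?rpred0.
have sub_s : {subset s <= undup (s ++ t)} by move=> j; rewrite mem_undup mem_cat => ->.
have sub_t : {subset t <= undup (s ++ t)}.
  by move=> j; rewrite mem_undup mem_cat => ->; rewrite orbT.
have sum_ext0 : \sum_(j <- undup (s ++ t)) (ext s f j - ext t h j) = 0.
  by rewrite sumrB !sum_ext // eq_sum subrr.
have := G_direct.2 _ _ (undup_uniq _) (fun j => rpredB (extG s f j fG) (extG t h j hG))
  sum_ext0 i (sub_s i si).
by move/eqP; rewrite subr_eq0 /ext si => /eqP.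
Qed.

Lemma graded_component_mem (P : zmodClosed V) (s : seq int) (f : int -> V) :
  graded Gp P -> uniq s -> (forall i, f i \in G i) -> \sum_(i <- s) f i \in P ->
  {in s, forall i, f i \in P}.
Proof.
move=> P_graded s_uniq fG /(graded_decomp_uniq P_graded)[t [h [t_uniq hG hP eq_sum]]] i si.
by rewrite (direct_sum_coord s_uniq t_uniq fG hG eq_sum si); case: ifP; rewrite ?rpred0.
Qed.

End GradedSubgroups.

Local Open Scope quotient_scope.

Section Subquotient.
Variables (A : pzRingType) (M : lmodType A) (N N' : zmodClosed M).
Hypotheses (N_scale : scaler_closed N) (N'_scale : scaler_closed N').
Hypothesis NN' : {subset N <= N'}.
Variable delta : M -> M.
Hypotheses (deltaB : {morph delta : x y / x - y})
  (delta_N : {homo delta : x / x \in N}) (delta_N' : {homo delta : x / x \in N'}).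

Record subm := SubM { subm_val : M; subm_valP : subm_val \in N' }.
HB.instance Definition _ := [isSub for subm_val].
HB.instance Definition _ := [Choice of subm by <:].
HB.instance Definition _ := GRing.SubChoice_isSubLmodule.Build A M (fun x => x \in N') subm
  (conj (@rpred0D _ N') N'_scale).

Definition inN : {pred subm} := [pred u | val u \in N].

Lemma inN_closed : zmod_closed inN.
Proof. by split=> [|u v]; rewrite !inE ?raddf0 ?raddfB ?rpred0 // => *; rewrite rpredB. Qed.
HB.instance Definition _ := GRing.isZmodClosed.Build subm inN inN_closed.

Local Notation quot := (Quotient.quot inN).

Lemma eq_piE (u v : subm) : (\pi_quot u == \pi_quot v) = (val (u - v) \in N).
Proof. by rewrite piE. Qed.

Lemma pi_eq0 (u : subm) : (\pi_quot u == 0) = (val u \in N).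
Proof. by rewrite -(raddf0 \pi_quot) eq_piE subr0. Qed.

Definition quot_scale (a : A) : quot -> quot := lift_op1 quot ( *:%R a).

Lemma pi_quot_scale a : {morph \pi_quot : u / a *: u >-> quot_scale a u}.
Proof.
move=> u; rewrite /quot_scale; unlock; apply/eqP.
by rewrite eq_piE -scalerBr linearZ N_scale // -eq_piE reprK.
Qed.

Lemma quot_scaleA a b q : quot_scale a (quot_scale b q) = quot_scale (a * b) q.
Proof. by elim/quotW: q => u; rewrite -!pi_quot_scale scalerA. Qed.

Lemma quot_scale1 : left_id 1 quot_scale.
Proof. by elim/quotW => u; rewrite -pi_quot_scale scale1r. Qed.

Lemma quot_scaleDr : right_distributive quot_scale +%R.
Proof.
move=> a; elim/quotW => u; elim/quotW => v.
by rewrite -raddfD -!pi_quot_scale scalerDr raddfD.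
Qed.

Lemma quot_scaleDl q : {morph quot_scale^~ q : a b / a + b}.
Proof. by elim/quotW: q => u a b; rewrite -!pi_quot_scale scalerDl raddfD. Qed.

HB.instance Definition _ :=
  GRing.Zmodule_isLmodule.Build A quot quot_scaleA quot_scale1 quot_scaleDr quot_scaleDl.

Lemma piZ a (u : subm) : \pi_quot (a *: u) = a *: \pi_quot u.
Proof. exact: pi_quot_scale. Qed.

Definition subm_diff (u : subm) : subm := SubM (delta_N' (subm_valP u)).

Lemma val_subm_diff u : val (subm_diff u) = delta (val u).
Proof. by []. Qed.

Lemma subm_diffB : {morph subm_diff : u v / u - v}.
Proof. by move=> u v; apply: val_inj => /=; rewrite deltaB. Qed.

Definition quot_diff : quot -> quot := lift_op1 quot subm_diff.

Lemma pi_diff : {morph \pi_quot : u / subm_diff u >-> quot_diff u}.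
Proof.
move=> u; rewrite /quot_diff; unlock; apply/eqP.
by rewrite eq_piE -subm_diffB val_subm_diff delta_N // -eq_piE reprK.
Qed.

Lemma acyclic_quot_boundary_mod : acyclic quot_diff ->
  forall x, x \in N' -> delta x = 0 -> exists2 y, y \in N' & x - delta y \in N.
Proof.
move=> quot_acyclic x xN' dx0.
have : quot_diff (\pi_quot (SubM xN')) = 0.
  by rewrite -pi_diff; apply/eqP; rewrite pi_eq0 val_subm_diff /= dx0 rpred0.
case/quot_acyclic; elim/quotW => v /eqP; rewrite -pi_diff eq_piE => xv.
by exists (val v); first exact: subm_valP.
Qed.

Variable G : int -> zmodClosed M.
Local Notation Gp := (fun i => G i : {pred M}).
Hypotheses (G_direct : direct_sum_decomp Gp) (N_graded : graded Gp N) (N'_graded : graded Gp N').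

Definition quot_grade (n : int) : {pred quot} :=
  fun q => `[< exists2 u : subm, val u \in G n & \pi_quot u = q >].

Lemma quot_gradeP n q :
  reflect (exists2 u : subm, val u \in G n & \pi_quot u = q) (q \in quot_grade n).
Proof. exact: asboolP. Qed.

Lemma quot_grade_subgroup n : additive_subgroup (quot_grade n).
Proof.
split=> [|_ _ /quot_gradeP[u uG <-] /quot_gradeP[v vG <-]]; apply/quot_gradeP.
  by exists 0; rewrite ?raddf0 ?rpred0.
by exists (u - v); rewrite ?raddfB ?rpredB.
Qed.

Lemma subm_decomp (u : subm) : exists (s : seq int) (g : int -> subm),
  [/\ uniq s, forall i, val (g i) \in G i & u = \sum_(i <- s) g i].
Proof.
have [s [f [s_uniq fG fN' uE]]] := graded_decomp_uniq N'_graded (subm_valP u).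
by exists s, (fun i => SubM (fN' i)); split=> //; apply: val_inj; rewrite raddf_sum.
Qed.

Lemma quot_grade_direct : direct_sum_decomp quot_grade.
Proof.
split=> [|s q s_uniq qG sum_q0 i si].
  elim/quotW => u; have [s [g [s_uniq gG ->]]] := subm_decomp u.
  exists s, (fun i => \pi_quot (g i)); split=> // [i|]; last exact: raddf_sum.
  by apply/quot_gradeP; exists (g i).
have /choice[u uP] : forall i, exists u : subm, val u \in G i /\ \pi_quot u = q i.
  by move=> j; have /quot_gradeP[u uG uq] := qG j; exists u.
have sum_uN : \sum_(j <- s) val (u j) \in N.
  rewrite -raddf_sum -pi_eq0 raddf_sum (eq_bigr q) ?sum_q0 // => j _.
  exact: (proj2 (uP j)).
have := graded_component_mem G_direct N_graded s_uniq (fun j => proj1 (uP j)) sum_uN si.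
by rewrite -pi_eq0 (proj2 (uP i)) => /eqP.
Qed.

Lemma dg_module_quot (R : comPzRingType) (phi : {rmorphism R -> A}) (GA : int -> pred A) d :
  dg_module phi GA d Gp delta -> dg_module phi GA d quot_grade quot_diff.
Proof.
move=> [_ [G_phi [_ [G_GA [delta_lin [delta_deg [delta2 leibniz]]]]]]].
split; first exact: quot_grade_subgroup.
split.
  move=> n r _ /quot_gradeP[u uG <-]; apply/quot_gradeP.
  by exists (phi r *: u); [rewrite linearZ; apply: G_phi | exact: piZ].
split; first exact: quot_grade_direct.
split.
  move=> m n a _ aG /quot_gradeP[u uG <-]; apply/quot_gradeP.
  by exists (a *: u); [rewrite linearZ; apply: G_GA | exact: piZ].
split.
  move=> r; elim/quotW => u; elim/quotW => v.
  rewrite -piZ -raddfD -!pi_diff -piZ -raddfD.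
  by congr \pi_quot; apply: val_inj => /=.
split.
  move=> n _ /quot_gradeP[u uG <-]; apply/quot_gradeP.
  by exists (subm_diff u); [apply: delta_deg | exact: pi_diff].
split.
  by elim/quotW => u; rewrite -!pi_diff; apply/eqP; rewrite pi_eq0 !val_subm_diff delta2 rpred0.
move=> m n a _ aG /quot_gradeP[u uG <-].
rewrite -piZ -!pi_diff -!piZ -raddfD.
by congr \pi_quot; apply: val_inj => /=; rewrite (leibniz m n).
Qed.

Definition preim_quot (L : {pred quot}) : {pred M} :=
  fun x => `[< exists2 u : subm, val u = x & \pi_quot u \in L >].

Lemma preim_quotP L x :
  reflect (exists2 u : subm, val u = x & \pi_quot u \in L) (x \in preim_quot L).
Proof. exact: asboolP. Qed.

Lemma preim_quot_val L u : (val u \in preim_quot L) = (\pi_quot u \in L).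
Proof. by apply/preim_quotP/idP => [[v /val_inj -> //]|uL]; exists u. Qed.

Lemma dg_submodule_preim L :
  dg_submodule quot_grade quot_diff L -> dg_submodule Gp delta (preim_quot L).
Proof.
move=> [[L0 LB] L_scale L_graded L_delta].
have L'0 : 0 \in preim_quot L by apply/preim_quotP; exists 0; rewrite ?raddf0.
split.
- split=> // _ _ /preim_quotP[u <- uL] /preim_quotP[v <- vL].
  by apply/preim_quotP; exists (u - v); rewrite ?raddfB ?LB.
- move=> a _ /preim_quotP[u <- uL].
  by apply/preim_quotP; exists (a *: u); rewrite ?linearZ ?piZ ?L_scale.
- move=> _ /preim_quotP[u <- uL]; have [s [g [s_uniq gG uE]]] := subm_decomp u.
  (* [graded] asks for a component in every degree, not only those listed in [s]. *)
  exists s, (fun i => if i \in s then val (g i) else 0); split=> [i|i|].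
  + by case: ifP; rewrite ?rpred0.
  + case: ifP => // si; rewrite preim_quot_val.
    apply: (graded_component_mem (G := fun n => zmodClosed_of (quot_grade_subgroup n))
      (P := zmodClosed_of (conj L0 LB)) (f := fun j => \pi_quot (g j))
      quot_grade_direct L_graded s_uniq _ _ si).
      by move=> j; apply/quot_gradeP; exists (g j).
    by rewrite -raddf_sum -uE.
  + by rewrite uE raddf_sum; apply: eq_big_seq => i ->.
- move=> _ /preim_quotP[u <- uL].
  by apply/preim_quotP; exists (subm_diff u); rewrite ?pi_diff ?L_delta.
Qed.

Lemma dg_simple_quot :
  dg_simple_subquotient Gp delta (N : {pred M}) (N' : {pred M}) ->
  dg_simple quot_grade quot_diff.
Proof.
move=> [[x [xN' xN]] NN'_simple]; split.
  by exists (\pi_quot (SubM xN')); rewrite pi_eq0.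
move=> L L_sub.
have N_L' y : y \in N -> y \in preim_quot L.
  move=> yN; rewrite -[y]/(val (SubM (NN' yN))) preim_quot_val.
  have /eqP -> : \pi_quot (SubM (NN' yN)) == 0 by rewrite pi_eq0.
  by case: L_sub => [[]].
have L'_N' y : y \in preim_quot L -> y \in N'.
  by case/preim_quotP => u <- _; exact: subm_valP.
case: (NN'_simple _ (dg_submodule_preim L_sub) N_L' L'_N') => [L'N | N'L']; [left | right].
  by elim/quotW => u; rewrite -preim_quot_val => /L'N; rewrite -pi_eq0 => /eqP.
by elim/quotW => u; rewrite -preim_quot_val; apply/N'L'/subm_valP.
Qed.

End Subquotient.

Section DGModuleFacts.
Variables (R : comPzRingType) (A : pzRingType) (phi : {rmorphism R -> A}).
Variables (GA : int -> pred A) (d : A -> A).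
Variables (M : lmodType A) (GM : int -> pred M) (delta : M -> M).
Hypothesis M_dg : dg_module phi GA d GM delta.

Lemma dg_module_diffD : {morph delta : x y / x + y}.
Proof.
case: M_dg => _ [_ [_ [_ [delta_lin _]]]] x y.
by have := delta_lin 1 x y; rewrite rmorph1 !scale1r.
Qed.

Lemma dg_module_diffB : {morph delta : x y / x - y}.
Proof. by move=> x y; apply: (addIr (delta y)); rewrite -dg_module_diffD !subrK. Qed.

Hypothesis simple_acyclic : forall (S : lmodType A) (GS : int -> pred S) (dS : S -> S),
  dg_module phi GA d GS dS -> dg_simple GS dS -> acyclic dS.

Lemma simple_subquotient_boundary_mod (N N' : pred M) :
  dg_submodule GM delta N -> dg_submodule GM delta N' ->
  {subset N <= N'} -> dg_simple_subquotient GM delta N N' ->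
  forall x, x \in N' -> delta x = 0 -> exists2 y, y \in N' & x - delta y \in N.
Proof.
move=> [N0 N_scale N_graded N_delta] [N'0 N'_scale N'_graded N'_delta] NN' NN'_simple.
have deltaB := dg_module_diffB.
pose G n := zmodClosed_of (M_dg.1 n).
have G_direct : direct_sum_decomp (fun i => G i : {pred M}) := M_dg.2.2.1.
pose Nc := zmodClosed_of N0; pose N'c := zmodClosed_of N'0.
apply: (acyclic_quot_boundary_mod (N := Nc) (N' := N'c) (N'_scale := N'_scale) deltaB N_delta
  (delta_N' := N'_delta)).
apply: simple_acyclic.
  exact: (dg_module_quot (N := Nc) (N' := N'c) N_scale N'_scale deltaB N_delta N'_delta
    G_direct N_graded N'_graded M_dg).
exact: (dg_simple_quot (N := Nc) (N' := N'c) N_scale N'_scale NN' deltaB N_delta N'_delta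
  G_direct N_graded N'_graded NN'_simple).
Qed.

Lemma dg_comp_length_acyclic n : dg_comp_length GM delta n -> acyclic delta.
Proof.
move=> [Ms [Ms_sub Ms0 MsT Ms_incr Ms_simple]].
have deltaB := dg_module_diffB.
have delta2 : forall x, delta (delta x) = 0 by case: M_dg => _ [_ [_ [_ [_ [_ []]]]]].
suff Ms_acyclic i : (i <= n)%N ->
    forall x, x \in Ms i -> delta x = 0 -> exists2 y, y \in Ms i & x = delta y.
  by move=> x /(Ms_acyclic n (leqnn n) x (MsT x))[y _ ->]; exists y.
elim: i => [_ x /Ms0 -> _ | i IH i_lt x x_i dx0].
  have [[Ms0_0 _] _ _ _] := Ms_sub 0%N isT.
  by exists 0; rewrite // -(subrr (0 : M)) deltaB !subrr.
have i_le : (0 < i.+1 <= n)%N by [].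
have [y y_i1 xy_i] := simple_subquotient_boundary_mod (Ms_sub i (ltnW i_lt))
  (Ms_sub i.+1 i_lt) (Ms_incr i.+1 i_le) (Ms_simple i.+1 i_le) x_i dx0.
have dxy0 : delta (x - delta y) = 0 by rewrite deltaB dx0 delta2 subrr.
have [z z_i xyz] := IH (ltnW i_lt) _ xy_i dxy0.
have [Ms_i1 _ _ _] := Ms_sub i.+1 i_lt.
exists (y + z); first by apply: (rpredD (S := zmodClosed_of Ms_i1)) => //; exact: Ms_incr.
by rewrite dg_module_diffD -xyz addrC subrK.
Qed.

End DGModuleFacts.

Lemma dg_algebra_regular_module (R : comPzRingType) (A : pzRingType)
    (phi : {rmorphism R -> A}) (GA : int -> pred A) (d : A -> A) :
  dg_algebra phi GA d -> dg_module (M := A^o) phi GA d GA d.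
Proof.
move=> [_ [GA_closed [GA_phi [GA_direct [_ [GA_mul [d_lin [d_deg [d2 leibniz]]]]]]]]].
do 7 split=> //.
by move=> m n a x aG xG; rewrite /= (leibniz n m) // mulrA.
Qed.

Unset Implicit Arguments.

Theorem theorem3p9 (R : comPzRingType) (A : pzRingType) (phi : {rmorphism R -> A})
    (GA : int -> pred A) (d : A -> A) :
  dg_algebra phi GA d ->
  (forall (S : lmodType A) (GS : int -> pred S) (dS : S -> S),
      dg_module phi GA d GS dS -> dg_simple GS dS -> acyclic dS) ->
  (forall (M : lmodType A) (GM : int -> pred M) (dM : M -> M),
      dg_module phi GA d GM dM ->
      (exists n, dg_comp_length GM dM n) -> acyclic dM) /\
  ((exists n, dg_comp_length (M := A^o) GA d n) -> acyclic d).
Proof.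
move=> A_dg simple_acyclic; split=> [M GM dM M_dg [n M_len] | [n A_len]].
  exact: (dg_comp_length_acyclic M_dg simple_acyclic M_len).
exact: (dg_comp_length_acyclic (M := A^o) (dg_algebra_regular_module A_dg) simple_acyclic A_len).
Qed.
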